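(* Let $\overline{G}$ be the roommate diversity game described in the context. No top-type outcome of $\overline{G}$ is popular.
   Context: In a roommate diversity game with agent set $N=R\cup B$ ($R$ red, $B$ blue) and room size $s$, an outcome is a partition of $N$ into rooms of size $s$; $\pi(a)$ is the room containing $a$ and $\theta(C)=|C\cap R|/|C|$. Each agent $a$ has a trichotomous preference given by a partition of the fractions into sets $D_a^+$ (approved), $D_a^n$ (neutral), $D_a^-$ (disapproved), possibly empty, with approved $\succ$ neutral $\succ$ disapproved and indifference within each set. Agent $a$ prefers $\pi$ to $\pi'$ if it strictly prefers $\theta(\pi(a))$ to $\theta(\pi'(a))$; $N(\pi,\pi')$ is the set of agents preferring $\pi$ to $\pi'$, $\phi(\pi,\pi')=|N(\pi,\pi')|-|N(\pi',\pi)|$, and $\pi$ is popular if $\phi(\pi,\pi')\ge0$ for all outcomes $\pi'$. The game $\overline{G}$: $R=\{r_1,r_2,r_3\}$, $B=\{b_1,\dots,b_6\}$, $s=3$; $r_1$: $D^+=\{1/3\}$, $D^-=\{2/3,1\}$; $r_2,r_3$: $D^+=\{2/3\}$, $D^-=\{1/3,1\}$; $b_1,\dots,b_4$: $D^+=\{1/3\}$, $D^n=\{2/3\}$, $D^-=\{0\}$; $b_5,b_6$: $D^+=\{0\}$, $D^-=\{1/3,2/3\}$ (a red agent is never in a room of fraction $0$, a blue agent never in one of fraction $1$). An outcome is top-type if it equals $\{\{r_1,\hat b_1,\hat b_2\},\{r_2,r_3,\hat b_3\},\{b_5,b_6,\hat b_4\}\}$ for some enumeration $\hat b_1,\dots,\hat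 b_4$ of $\{b_1,b_2,b_3,b_4\}$. *)

From mathcomp Require Import all_boot all_order all_algebra.
Set Implicit Arguments. Unset Strict Implicit. Unset Printing Implicit Defensive.
Import Order.TTheory GRing.Theory Num.Theory.

Inductive category := Approved | Neutral | Disapproved.

Definition cat_rank (c : category) : nat :=
  match c with Approved => 2 | Neutral => 1 | Disapproved => 0 end.

Section Game.
Variable T : finType.
Variable Red : {set T}.          (* red agents R; blue agents are ~: Red *)
Variable s : nat.
Variable pref : T -> rat -> category.
  (* pref a q = Approved iff q \in D_a^+, Neutral iff q \in D_a^n,
     Disapproved iff q \in D_a^- *)

Definition theta (C : {set T}) : rat := (#|C :&: Red|)%:R / (#|C|)%:R.

Definition is_outcome (P : {set {set T}}) : bool :=
  partition P [set: T] && [forall C in P, #|C| == s].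

(* pi(a) = pblock P a *)
Definition prefers (a : T) (P Q : {set {set T}}) : bool :=
  (cat_rank (pref a (theta (pblock Q a))) < cat_rank (pref a (theta (pblock P a))))%N.

Definition N_pref (P Q : {set {set T}}) : {set T} := [set a | prefers a P Q].

Definition phi (P Q : {set {set T}}) : int :=
  (#|N_pref P Q|)%:Z - (#|N_pref Q P|)%:Z.

Definition popular (P : {set {set T}}) : Prop :=
  is_outcome P /\ forall Q, is_outcome Q -> (0 <= phi P Q)%R.

End Game.

Definition agent := 'I_9.
Definition r1 : agent := @Ordinal 9 0 isT.
Definition r2 : agent := @Ordinal 9 1 isT.
Definition r3 : agent := @Ordinal 9 2 isT.
Definition b1 : agent := @Ordinal 9 3 isT.
Definition b2 : agent := @Ordinal 9 4 isT.
Definition b3 : agent := @Ordinal 9 5 isT.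
Definition b4 : agent := @Ordinal 9 6 isT.
Definition b5 : agent := @Ordinal 9 7 isT.
Definition b6 : agent := @Ordinal 9 8 isT.

Definition RedG : {set agent} := [set r1; r2; r3].

Definition third : rat := (1%:R / 3%:R)%R.
Definition two_thirds : rat := (2%:R / 3%:R)%R.

(* Fractions not listed in an agent's preference (0 for red agents, 1 for
   blue agents) can never occur for that agent; they are put in D^-. *)
Definition prefG (a : agent) (q : rat) : category :=
  if a == r1 then (if q == third then Approved else Disapproved)
  else if (a == r2) || (a == r3) then
    (if q == two_thirds then Approved else Disapproved)
  else if a \in [set b1; b2; b3; b4] then
    (if q == third then Approved
     else if q == two_thirds then Neutral else Disapproved)
  else (if q == 0%R then Approved else Disapproved).

Definition top_outcome (bh : 'I_4 -> agent) : {set {set agent}} :=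
  [set [set r1; bh (@Ordinal 4 0 isT); bh (@Ordinal 4 1 isT)];
       [set r2; r3; bh (@Ordinal 4 2 isT)];
       [set b5; b6; bh (@Ordinal 4 3 isT)]].

Definition top_type (P : {set {set agent}}) : Prop :=
  exists bh : 'I_4 -> agent,
    injective bh /\ (forall i, bh i \in [set b1; b2; b3; b4]) /\ P = top_outcome bh.

(* Rotate the last three blue agents of a top-type outcome
   P = {r1, a, b}, {r2, r3, c}, {b5, b6, d} to obtain the top-type outcome
   Q = {r1, a, c}, {r2, r3, d}, {b5, b6, b}.  The rooms still have red fractions
   1/3, 2/3 and 0, so only b, c and d see their fraction change.  Agent c moves
   from 2/3 (neutral) to 1/3 (approved) and d from 0 (disapproved) to 2/3
   (neutral), so two agents prefer Q while at most b prefers P: phi(P, Q) < 0. *)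

From mathcomp Require Import all_boot all_order all_algebra.
Import Order.TTheory GRing.Theory Num.Theory.

Set Implicit Arguments.
Unset Strict Implicit.
Unset Printing Implicit Defensive.

Section Rooms.
Variable T : finType.
Implicit Types (s u v : seq T) (x y z : T).

Lemma set3_seq x y z : [set x; y; z] = [set:: [:: x; y; z]].
Proof. by apply/setP => t; rewrite !inE orbA. Qed.

Lemma disjoint_uniq_cat u v : uniq (u ++ v) -> [disjoint [set:: u] & [set:: v]].
Proof.
rewrite cat_uniq => /and3P[_ uv _]; rewrite disjoint_sym.
rewrite (eq_disjoint (in_set (mem v))) (eq_disjoint_r (in_set (mem u))).
by rewrite disjoint_has.
Qed.

Lemma trivIset_seq3 s1 s2 s3 :
  uniq (s1 ++ s2 ++ s3) -> trivIset [set [set:: s1]; [set:: s2]; [set:: s3]].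
Proof.
move=> u123.
have u12 : uniq (s1 ++ s2) by move: u123; rewrite catA cat_uniq => /andP[].
have u13 : uniq (s1 ++ s3).
  by apply: subseq_uniq u123; apply: cat_subseq (subseq_refl _) (suffix_subseq _ _).
have u23 : uniq (s2 ++ s3) by move: u123; rewrite cat_uniq => /and3P[].
apply/trivIsetP => A B; rewrite !inE.
move=> /orP[/orP[]|] /eqP-> /orP[/orP[]|] /eqP->; rewrite ?eqxx // => _.
all: by [exact: disjoint_uniq_cat | rewrite disjoint_sym; exact: disjoint_uniq_cat].
Qed.

Lemma is_outcome_seq3 n s1 s2 s3 :
  uniq (s1 ++ s2 ++ s3) -> (forall x, x \in s1 ++ s2 ++ s3) ->
  size s1 = n.+1 -> size s2 = n.+1 -> size s3 = n.+1 ->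
  is_outcome n.+1 [set [set:: s1]; [set:: s2]; [set:: s3]].
Proof.
move=> u123 cover123 n1 n2 n3.
have [u1 u23] : uniq s1 /\ uniq (s2 ++ s3) by move: u123; rewrite cat_uniq => /and3P[].
have [u2 u3] : uniq s2 /\ uniq s3 by move: u23; rewrite cat_uniq => /and3P[].
have card_room s : uniq s -> #|[set:: s]| = size s.
  by move=> us; rewrite cardsE (card_uniqP us).
apply/andP; split; last first.
  by apply/forall_inP => C; rewrite !inE => /orP[/orP[]|] /eqP->;
    rewrite card_room // ?n1 ?n2 ?n3.
apply/and3P; split; last first.
- by rewrite !inE !(eq_sym set0) -!cards_eq0 !card_room // n1 n2 n3.
- exact: trivIset_seq3.
apply/eqP/setP => x; rewrite inE; apply/bigcupP.
move: (cover123 x); rewrite !mem_cat => /orP[|/orP[]] xs.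
- by exists [set:: s1]; rewrite !inE ?eqxx.
- by exists [set:: s2]; rewrite !inE ?eqxx ?orbT.
- by exists [set:: s3]; rewrite !inE ?eqxx ?orbT.
Qed.

Lemma theta_seq (Red : {set T}) s :
  uniq s -> theta Red [set:: s] = ((count [in Red] s)%:R / (size s)%:R)%R.
Proof.
move=> us; rewrite /theta; have -> : [set:: s] :&: Red = [set:: filter [in Red] s].
  by apply/setP => x; rewrite !inE mem_filter andbC.
by rewrite !cardsE (card_uniqP us) (card_uniqP (filter_uniq _ us)) size_filter.
Qed.

End Rooms.

Section Preferences.
Variables (T : finType) (Red : {set T}) (pref : T -> rat -> category).
Implicit Types (P Q : {set {set T}}) (x : T).

Lemma eq_theta_not_prefers P Q x :
  theta Red (pblock P x) = theta Red (pblock Q x) -> ~~ prefers Red pref x P Q.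
Proof. by rewrite /prefers => ->; rewrite ltnn. Qed.

Lemma prefers_asym P Q x : prefers Red pref x P Q -> ~~ prefers Red pref x Q P.
Proof. by rewrite /prefers -leqNgt => /ltnW. Qed.

Lemma phi_lt0 P Q y u v :
  N_pref Red pref P Q \subset [set y] -> [set u; v] \subset N_pref Red pref Q P ->
  u != v -> (phi Red pref P Q < 0)%R.
Proof.
move=> /subset_leq_card le1 /subset_leq_card le2 uv.
rewrite /phi subr_lt0 ltz_nat; rewrite cards1 in le1; rewrite cards2 uv in le2.
exact: leq_ltn_trans le1 le2.
Qed.

End Preferences.

Lemma agent_split x : (x \in [:: r1; r2; r3; b5; b6]) || (x \in [:: b1; b2; b3; b4]).
Proof. by case: x => [[|[|[|[|[|[|[|[|[|//]]]]]]]]] ?]. Qed.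

Lemma blue_not_red u : u \in [:: b1; b2; b3; b4] -> u \in RedG = false.
Proof. by rewrite !inE => /or4P[]/eqP->. Qed.

Lemma prefG_blue u q : u \in [:: b1; b2; b3; b4] ->
  prefG u q =
    if q == third then Approved else if q == two_thirds then Neutral else Disapproved.
Proof. by rewrite /prefG !inE => /or4P[]/eqP->. Qed.

Definition top3 (a b c d : agent) : {set {set agent}} :=
  [set [set r1; a; b]; [set r2; r3; c]; [set b5; b6; d]].

Section TopOutcome.
Variables a b c d : agent.
Hypothesis abcd : perm_eq [:: a; b; c; d] [:: b1; b2; b3; b4].

Let rooms := [:: r1; a; b] ++ [:: r2; r3; c] ++ [:: b5; b6; d].

Lemma top3_cover x : x \in rooms.
Proof.
move: (agent_split x); rewrite -(perm_mem abcd) !inE.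
by case/orP=> [/orP[|/or4P[]]|/or4P[]] /eqP->; rewrite ?eqxx ?orbT.
Qed.

Lemma top3_uniq : uniq rooms.
Proof.
(* All nine agents occur among the nine entries of [rooms], so none repeats. *)
have all_rooms : enum agent =i rooms by move=> x; rewrite mem_enum top3_cover.
by rewrite (uniq_size_uniq (enum_uniq _) all_rooms) -cardE card_ord.
Qed.

Lemma top3E : top3 a b c d =
  [set [set:: [:: r1; a; b]]; [set:: [:: r2; r3; c]]; [set:: [:: b5; b6; d]]].
Proof. by rewrite /top3 !set3_seq. Qed.

Lemma top3_outcome : is_outcome 3 (top3 a b c d).
Proof. by rewrite top3E; apply: is_outcome_seq3 top3_uniq top3_cover _ _ _. Qed.

Lemma theta_top3 :
  let theta_room x := theta RedG (pblock (top3 a b c d) x) in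
  [/\ {in [:: r1; a; b], forall x, theta_room x = third},
       {in [:: r2; r3; c], forall x, theta_room x = two_thirds} &
       {in [:: b5; b6; d], forall x, theta_room x = 0%R}].
Proof.
have tri : trivIset (top3 a b c d) by rewrite top3E; apply: trivIset_seq3 top3_uniq.
have [u1 u23] : uniq [:: r1; a; b] /\ uniq ([:: r2; r3; c] ++ [:: b5; b6; d]).
  by move: top3_uniq; rewrite cat_uniq => /and3P[].
have [u2 u3] : uniq [:: r2; r3; c] /\ uniq [:: b5; b6; d].
  by move: u23; rewrite cat_uniq => /and3P[].
have not_red u : u \in [:: a; b; c; d] -> u \in RedG = false.
  by rewrite (perm_mem abcd); apply: blue_not_red.
have theta_room s x : [set:: s] \in top3 a b c d -> uniq s -> x \in s ->
    theta RedG (pblock (top3 a b c d) x) = ((count [in RedG] s)%:R / (size s)%:R)%R.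
  by move=> sP us xs; rewrite (def_pblock tri sP) ?inE // theta_seq.
split=> x xs.
- rewrite (theta_room _ x _ u1 xs); last by rewrite top3E !inE eqxx.
  by rewrite /= (not_red a) ?(not_red b) ?inE ?eqxx ?orbT.
- rewrite (theta_room _ x _ u2 xs); last by rewrite top3E !inE eqxx ?orbT.
  by rewrite /= (not_red c) ?inE ?eqxx ?orbT.
- rewrite (theta_room _ x _ u3 xs); last by rewrite top3E !inE eqxx ?orbT.
  by rewrite /= (not_red d) ?inE ?eqxx ?orbT.
Qed.

End TopOutcome.

Section Rotation.
Variables a b c d : agent.
Hypothesis abcd : perm_eq [:: a; b; c; d] [:: b1; b2; b3; b4].

Let P := top3 a b c d.
Let Q := top3 a c d b.

Lemma perm_blues_rotate : perm_eq [:: a; c; d; b] [:: b1; b2; b3; b4].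
Proof. by apply: perm_trans abcd; rewrite perm_cons (perm_rot 1 [:: b; c; d]). Qed.

Lemma theta_top3_rotate x :
  x \notin [:: b; c; d] -> theta RedG (pblock P x) = theta RedG (pblock Q x).
Proof.
move=> xbcd; have [P1 P2 P3] := theta_top3 abcd.
have [Q1 Q2 Q3] := theta_top3 perm_blues_rotate.
move: (top3_cover abcd x); rewrite !mem_cat => /or3P[] xs.
- by rewrite P1 // Q1 //; move: xs xbcd; rewrite !inE; do ![case: (_ == _)].
- by rewrite P2 // Q2 //; move: xs xbcd; rewrite !inE; do ![case: (_ == _)].
- by rewrite P3 // Q3 //; move: xs xbcd; rewrite !inE; do ![case: (_ == _)].
Qed.

Lemma prefers_top3_rotate : prefers RedG prefG c Q P /\ prefers RedG prefG d Q P.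
Proof.
have [_ P2 P3] := theta_top3 abcd; have [Q1 Q2 _] := theta_top3 perm_blues_rotate.
have blue u : u \in [:: a; b; c; d] -> u \in [:: b1; b2; b3; b4] by rewrite (perm_mem abcd).
split; rewrite /prefers !prefG_blue ?blue ?inE ?eqxx ?orbT //.
- by rewrite (P2 c) ?(Q1 c) ?inE ?eqxx ?orbT.
- by rewrite (P3 d) ?(Q2 d) ?inE ?eqxx ?orbT.
Qed.

Lemma phi_top3_rotate : (phi RedG prefG P Q < 0)%R.
Proof.
have [cQP dQP] := prefers_top3_rotate.
apply: (@phi_lt0 _ _ _ _ _ b c d).
- apply/subsetP => x; rewrite !inE; apply: contraTT => xb.
  have [|xbcd] := boolP (x \in [:: b; c; d]); last first.
    exact/eq_theta_not_prefers/theta_top3_rotate.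
  by rewrite !inE (negbTE xb) /= => /orP[]/eqP->; apply: prefers_asym.
- by apply/subsetP => x; rewrite !inE => /orP[]/eqP->.
- by move: (perm_uniq abcd); rewrite /= !inE => /and4P[_ _ cd _].
Qed.

End Rotation.

Lemma top_type_top3 P :
  top_type P -> exists a b c d,
    perm_eq [:: a; b; c; d] [:: b1; b2; b3; b4] /\ P = top3 a b c d.
Proof.
case=> bh [bh_inj [bh_blue ->]]; do 4!eexists; split; last reflexivity.
have blue i : bh i \in [:: b1; b2; b3; b4] by move: (bh_blue i); rewrite !inE -!orbA.
have bh_eq i j : (bh i == bh j) = (i == j) := inj_eq bh_inj i j.
apply: uniq_perm => //; first by rewrite /= !inE !bh_eq.
apply: (uniq_min_size _ _ _).2 => //; first by rewrite /= !inE !bh_eq.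
by apply/allP; rewrite /= !blue.
Qed.

Theorem mainTheorem9 (P : {set {set agent}}) :
  top_type P -> ~ popular RedG 3 prefG P.
Proof.
case/top_type_top3 => a [b [c [d [abcd ->]]]] [_ P_popular].
have := P_popular _ (top3_outcome (perm_blues_rotate abcd)).
by rewrite leNgt (phi_top3_rotate abcd).
Qed.
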